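(* Let $|\text{-}|:\mathcal E\to\mathcal B$ be a concrete category over $\mathcal B$. Then the $\mathcal Q_{\mathcal B}$-category $\overline{\mathcal E}$ is tensored if and only if $\mathcal E$ is cofibred over $\mathcal B$ and, for all $X\in\mathrm{ob}\,\mathcal E$, $T\in\mathrm{ob}\,\mathcal B$ and every subset $\mathbf f\subseteq\mathcal B(|X|,T)$, there is $Y\in\mathrm{ob}\,\mathcal E$ with $|Y|=T$ and $$\overline{\mathcal E}(Y,Z)=\bigcap_{f\in\mathbf f}\overline{\mathcal E}(f\star X,Z)\quad\text{for all }Z\in\mathrm{ob}\,\mathcal E.$$
   Context: $\mathcal B$ is a category with small hom-sets; a concrete category over $\mathcal B$ is a category with a faithful functor $|\text{-}|:\mathcal E\to\mathcal B$; a map $f:|X|\to|Y|$ is an $\mathcal E$-morphism if it is $|f'|$ for some $f':X\to Y$. $\mathcal E$ is cofibred if for every $X\in\mathrm{ob}\,\mathcal E$ and every map $f:|X|\to T$ there is an object $f\star X$ with $|f\star X|=T$ such that a map $g:T\to|Z|$ is an $\mathcal E$-morphism $f\star X\to Z$ iff $g\circ f$ is an $\mathcal E$-morphism $X\to Z$. The free quantaloid $\mathcal Q_{\mathcal B}$ has the objects of $\mathcal B$, arrows $S\to T$ all subsets of $\mathcal B(S,T)$ ordered by inclusion, composition $\mathbf g\circ\mathbf f=\{g\circ f\mid f\in \mathbf f,g\in\mathbf g\}$; for $\mathbf f\subseteq\mathcal B(S,T)$, $\mathbf h\subseteq\mathcal B(S,U)$, $\mathbf h\swarrow\mathbf f=\{g\in\mathcal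 B(T,U)\mid\forall f\in\mathbf f: g\circ f\in\mathbf h\}$. $\overline{\mathcal E}$ is the $\mathcal Q_{\mathcal B}$-category with objects of $\mathcal E$, extents $|X|$, and $\overline{\mathcal E}(X,Y)$ the set of $\mathcal E$-morphisms $|X|\to|Y|$. $\overline{\mathcal E}$ is tensored if for all $X\in\mathrm{ob}\,\mathcal E$ and all $\mathbf u\subseteq\mathcal B(|X|,T)$ there is $Y$ with $|Y|=T$ and $\overline{\mathcal E}(Y,Z)=\overline{\mathcal E}(X,Z)\swarrow\mathbf u$ for all $Z$. *)

Set Implicit Arguments.
Set Universe Polymorphism.

Record Category := MkCat {
  ob :> Type;
  hom : ob -> ob -> Type;
  idm : forall a, hom a a;
  comp : forall a b c0, hom b c0 -> hom a b -> hom a c0;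
  comp_id_l : forall a b (f : hom a b), comp (idm b) f = f;
  comp_id_r : forall a b (f : hom a b), comp f (idm a) = f;
  comp_assoc : forall a b c0 d (h : hom c0 d) (g : hom b c0) (f : hom a b),
      comp h (comp g f) = comp (comp h g) f
}.
Arguments idm {C} a : rename.
Arguments comp {C a b c0} _ _ : rename.
Arguments hom {C} _ _ : rename.

Record Functor (E B : Category) := {
  fob :> E -> B;
  fmap : forall X Y : E, hom X Y -> hom (fob X) (fob Y);
  fmap_id : forall X, fmap X X (idm X) = idm (fob X);
  fmap_comp : forall X Y Z (g : hom Y Z) (f : hom X Y),
      fmap X Z (comp g f) = comp (fmap Y Z g) (fmap X Y f)
}.
Arguments fmap {E B} F {X Y} _ : rename.

Definition faithful (E B : Category) (F : Functor E B) : Prop :=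
  forall X Y (f g : hom X Y), fmap F f = fmap F g -> f = g.

Record Concrete (B : Category) := {
  cat : Category;
  forget : Functor cat B;
  forget_faithful : faithful forget
}.

Section Concrete.
Variable B : Category.
Variable E : Concrete B.
Definition ext (X : cat E) : B := fob (forget E) X.

(** Arrows S -> T in the free quantaloid Q_B: subsets of B(S,T). *)
Definition QArr (S T : B) := hom S T -> Prop.

Definition rlift (S T U : B) (h : QArr S U) (f : QArr S T) : QArr T U :=
  fun g => forall f0, f f0 -> h (comp g f0).

Definition Ebar (X Z : cat E) : QArr (ext X) (ext Z) :=
  fun g => exists g' : hom X Z, fmap (forget E) g' = g.
Arguments Ebar : clear implicits.

Definition castL (Y : cat E) (T U : B) (e : (ext Y) = T) (g : hom T U) : hom (ext Y) U :=
  match e in _ = T' return hom T' U -> hom (ext Y) U with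
  | eq_refl => fun g => g
  end g.
Arguments castL {Y T U} e g.

Definition EbarAt (Y Z : cat E) (T : B) (e : (ext Y) = T) : QArr T (ext Z) :=
  fun g => Ebar Y Z (castL e g).
Arguments EbarAt {Y} Z {T} e _.

Definition tensored : Prop :=
  forall (X : cat E) (T : B) (u : QArr (ext X) T),
    exists (Y : cat E) (e : (ext Y) = T),
      forall Z : cat E, forall g, EbarAt Z e g <-> rlift (Ebar X Z) u g.

(** Y (with e : (ext Y) = T) is a cocartesian lift  f ⋆ X  of f : (ext X) -> T. *)
Definition is_star (X : cat E) (T : B) (f : hom (ext X) T) (Y : cat E) (e : (ext Y) = T) : Prop :=
  forall (Z : cat E) (g : hom T (ext Z)), EbarAt Z e g <-> Ebar X Z (comp g f).
Arguments is_star {X T} f Y e.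

Definition cofibred : Prop :=
  forall (X : cat E) (T : B) (f : hom (ext X) T), exists (Y : cat E) (e : (ext Y) = T), is_star f Y e.

(** Since f ⋆ X is only
    determined up to its universal property, we intersect over every
    cocartesian lift W of f (all of them give the same subset of B(T,(ext Z))). *)
Definition star_intersections : Prop :=
  forall (X : cat E) (T : B) (ff : QArr (ext X) T),
    exists (Y : cat E) (e : (ext Y) = T),
      forall (Z : cat E) (g : hom T (ext Z)),
        EbarAt Z e g <->
        (forall f, ff f -> forall (W : cat E) (ew : (ext W) = T),
            is_star f W ew -> EbarAt Z ew g).
End Concrete.

From Stdlib Require Import Setoid.

(* A tensor of X by a singleton {f} is precisely a cocartesian lift f ⋆ X, since
   Ebar(X,Z) ↙ {f} = { g | g ∘ f ∈ Ebar(X,Z) }.  Moreover Ebar(X,Z) ↙ 𝐟 is the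
   intersection of the Ebar(X,Z) ↙ {f} over f ∈ 𝐟, which, once every f has a
   cocartesian lift, is the intersection of the Ebar(f ⋆ X, Z).  So both sides of the
   equivalence ask for an object Y over T representing the same subsets. *)

Section Tensors.
Variable B : Category.
Variable E : Concrete B.

Lemma rlift_singleton (X Z : cat E) (T : B) (f : hom (ext E X) T) (g : hom T (ext E Z)) :
  rlift (Ebar E X Z) (fun f0 => f0 = f) g <-> Ebar E X Z (comp g f).
Proof.
split.
- intros Hg; exact (Hg f eq_refl).
- intros Hg f0 ->; exact Hg.
Qed.

Lemma tensored_cofibred : tensored E -> cofibred E.
Proof.
intros Ht X T f.
destruct (Ht X T (fun f0 => f0 = f)) as [Y [e He]].
exists Y, e; intros Z g.
rewrite <- rlift_singleton; apply He.
Qed.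

Lemma rlift_star_intersection (X Z : cat E) (T : B) (ff : QArr B (ext E X) T)
    (g : hom T (ext E Z)) :
  cofibred E ->
  rlift (Ebar E X Z) ff g <->
  (forall f, ff f -> forall (W : cat E) (ew : ext E W = T),
      is_star E X f W ew -> EbarAt E W Z ew g).
Proof.
intros Hc; split.
- intros Hg f Hf W ew Hw; apply (proj2 (Hw Z g)), Hg, Hf.
- intros Hg f Hf.
  destruct (Hc X T f) as [W [ew Hw]].
  apply (proj1 (Hw Z g)), (Hg f Hf W ew Hw).
Qed.

End Tensors.

Theorem proposition4p3 (B : Category) (E : Concrete B) :
  tensored E <-> (cofibred E /\ star_intersections E).
Proof.
split.
- intros Ht.
  assert (Hc : cofibred E) by (apply tensored_cofibred; exact Ht).
  split; [exact Hc |].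
  intros X T ff.
  destruct (Ht X T ff) as [Y [e He]].
  exists Y, e; intros Z g.
  rewrite <- rlift_star_intersection by exact Hc; apply He.
- intros [Hc Hs] X T u.
  destruct (Hs X T u) as [Y [e He]].
  exists Y, e; intros Z g.
  rewrite rlift_star_intersection by exact Hc; apply He.
Qed.
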